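(* Let $G$ be a digraph with a fixed upward planar drawing and let $\mathcal{P}$ be a set of pairwise vertex disjoint directed paths in $G$. Then (1) the relation $\prec_{\mathcal{P}}$ is irreflexive, and (2) $\prec_{\mathcal{P}}$ is anti-symmetric, i.e. if $P_1\prec_{\mathcal{P}}P_2$ then $P_2\not\prec_{\mathcal{P}}P_1$ for any $P_1,P_2\in\mathcal{P}$.
   Context: An upward planar drawing of a digraph is a plane drawing (no edge crossings) in which every directed edge is a curve monotone increasing in the $y$-direction from tail to head. A path is identified with the set of points of $\mathbb{R}^2$ in its drawing. For a path $P$ with endpoints $(x,y)$, $(x',y')$, $y\le y'$, let $\mathrm{Right}(P):=\{(u,v)\in\mathbb{R}^2: y\le v\le y',\ u'<u \text{ for all } u' \text{ with } (u',v)\in P\}$ and $\mathrm{Left}(P):=\{(u,v)\in\mathbb{R}^2: y\le v\le y',\ u'>u \text{ for all } u' \text{ with } (u',v)\in P\}$. A point $p\notin P$ is to the right of $P$ if $p\in\mathrm{Right}(P)$ and to the left of $P$ if $p\in\mathrm{Left}(P)$. For vertex disjoint paths $P,Q$, write $Q\prec P$ ($P$ is to the right of $Q$) if some point of $P$ is to the right of $Q$. $\prec_{\mathcal{P}}$ denotes the restriction of $\prec$ to the paths in $\mathcal{P}$. *)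

From Stdlib Require Import Reals List.
Import ListNotations.
Open Scope R_scope.

Definition point := (R * R)%type.

Section Drawing.
Variables (V Ed : Type) (tail head : Ed -> V).

Definition finite_digraph : Prop :=
  (exists lv : list V, forall v, In v lv) /\ (exists le : list Ed, forall e, In e le).

(* A drawing: vertex v is drawn at pos v; edge e is drawn as the curve
   curve e restricted to the parameter interval [0,1]. *)
Variables (pos : V -> point) (curve : Ed -> R -> point).

Definition in01 (s : R) : Prop := 0 <= s <= 1.

Definition upward_planar_drawing : Prop :=
  (forall v w, pos v = pos w -> v = w) /\
  (forall e, forall s, in01 s -> continuity_pt (fun t => fst (curve e t)) s
                              /\ continuity_pt (fun t => snd (curve e t)) s) /\
  (forall e, curve e 0 = pos (tail e) /\ curve e 1 = pos (head e)) /\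
  (forall e s t, in01 s -> in01 t -> s < t -> snd (curve e s) < snd (curve e t)) /\
  (forall e s v, 0 < s < 1 -> curve e s <> pos v) /\
  (forall e e' s t, e <> e' -> in01 s -> in01 t -> curve e s = curve e' t ->
     exists v, curve e s = pos v).

Record dpath := DPath { pverts : list V; pedges : list Ed }.

Definition is_dpath (P : dpath) : Prop :=
  pverts P <> [] /\ NoDup (pverts P) /\
  length (pverts P) = S (length (pedges P)) /\
  forall i e, nth_error (pedges P) i = Some e ->
    nth_error (pverts P) i = Some (tail e) /\
    nth_error (pverts P) (S i) = Some (head e).

Definition pts (P : dpath) (p : point) : Prop :=
  (exists v, In v (pverts P) /\ p = pos v) \/
  (exists e s, In e (pedges P) /\ in01 s /\ p = curve e s).

Definition first_vertex (P : dpath) (v0 : V) : V := hd v0 (pverts P).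
Definition last_vertex (P : dpath) (v0 : V) : V := last (pverts P) v0.

(* Right(P): with endpoints (x,y), (x',y'), y <= y', the points (u,v) with
   y <= v <= y' lying strictly to the right of every point of P at height v.
   (The default v0 is irrelevant since paths are nonempty.) *)
Definition RightP (P : dpath) (p : point) : Prop :=
  forall v0 : V,
  let y1 := snd (pos (first_vertex P v0)) in
  let y2 := snd (pos (last_vertex P v0)) in
  Rmin y1 y2 <= snd p <= Rmax y1 y2 /\
  forall u', pts P (u', snd p) -> u' < fst p.

Definition right_of (P : dpath) (p : point) : Prop :=
  ~ pts P p /\ RightP P p.

Definition prec (Q P : dpath) : Prop :=
  exists p, pts P p /\ right_of Q p.

Definition prec_in (F : dpath -> Prop) (Q P : dpath) : Prop :=
  F Q /\ F P /\ prec Q P.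

Definition disjoint_path_family (F : dpath -> Prop) : Prop :=
  (forall P, F P -> is_dpath P) /\
  (forall P Q, F P -> F Q -> P <> Q -> forall v, In v (pverts P) -> ~ In v (pverts Q)).

End Drawing.

From Stdlib Require Import Reals List Lra Psatz ClassicalEpsilon Classical Ranalysis5.
Import ListNotations.
Open Scope R_scope.

(* A path of an upward planar drawing is a y-monotone curve, so over its height range it is
   the graph of a continuous function x = X(y).  If distinct disjoint paths satisfied both
   P1 ≺ P2 and P2 ≺ P1, then X2 - X1 would be positive at the height of a point of P2 to the
   right of P1 and negative at the height of a point of P1 to the right of P2; by the
   intermediate value theorem the paths would share a point, which planarity and vertex
   disjointness forbid.  Irreflexivity is immediate: a point to the right of P is not on P. *)

Lemma continuity_pt_cst (c t : R) : continuity_pt (fun _ => c) t.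
Proof. apply continuity_pt_const. intros ? ?; reflexivity. Qed.

Lemma continuity_pt_translate (c t : R) : continuity_pt (fun s => c + s) t.
Proof.
  exact (continuity_pt_plus (fun _ => c) id t (continuity_pt_cst c t)
           (derivable_continuous_pt _ _ (derivable_pt_id t))).
Qed.

Lemma continuity_pt_shift (g : R -> R) (c t : R) :
  continuity_pt g (t - c) -> continuity_pt (fun s => g (s - c)) t.
Proof.
  apply (continuity_pt_comp (fun s => s - c) g t).
  exact (continuity_pt_minus id (fun _ => c) t
           (derivable_continuous_pt _ _ (derivable_pt_id t)) (continuity_pt_cst c t)).
Qed.

Lemma IVT_between (f : R -> R) (a b : R) :
  continuity f -> f a * f b <= 0 -> exists h, (a <= h <= b \/ b <= h <= a) /\ f h = 0.
Proof.
  intros Hf Hab. destruct (Rle_dec a b) as [Hle | Hgt].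
  - destruct (IVT_cor f a b Hf Hle Hab) as [h [Hh Hfh]]. exists h; auto.
  - rewrite Rmult_comm in Hab.
    destruct (IVT_cor f b a Hf ltac:(lra) Hab) as [h [Hh Hfh]]. exists h; auto.
Qed.

Lemma continuity_pt_piecewise (f g h : R -> R) (a t : R) :
  (forall x, x <= a -> h x = f x) -> (forall x, a < x -> h x = g x) -> f a = g a ->
  (t <= a -> continuity_pt f t) -> (a <= t -> continuity_pt g t) -> continuity_pt h t.
Proof.
  intros Hf Hg Ha Cf Cg. destruct (Rtotal_order t a) as [Hlt | [-> | Hgt]].
  - apply (continuity_pt_locally_ext f h (a - t) t); [lra | | apply Cf; lra].
    intros y Hy. unfold Rdist in Hy. apply Rabs_def2 in Hy. symmetry; apply Hf; lra.
  - specialize (Cf (Rle_refl a)). specialize (Cg (Rle_refl a)).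
    unfold continuity_pt, continue_in, limit1_in, limit_in in *; simpl in *.
    intros eps Heps.
    destruct (Cf eps Heps) as [d1 [Hd1 K1]]. destruct (Cg eps Heps) as [d2 [Hd2 K2]].
    exists (Rmin d1 d2). split; [apply Rmin_glb_lt; auto |].
    intros x [Dx Hx]. pose proof (Rmin_l d1 d2). pose proof (Rmin_r d1 d2).
    rewrite (Hf a (Rle_refl a)). destruct (Rle_dec x a).
    + rewrite (Hf x) by auto. apply K1. split; [auto | lra].
    + rewrite (Hg x), Ha by lra. apply K2. split; [auto | lra].
  - apply (continuity_pt_locally_ext g h (t - a) t); [lra | | apply Cg; lra].
    intros y Hy. unfold Rdist in Hy. apply Rabs_def2 in Hy. symmetry; apply Hg; lra.
Qed.

Lemma increasing_piecewise (D : R -> Prop) (f g h : R -> R) (a : R) :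
  (forall x, x <= a -> h x = f x) -> (forall x, a < x -> h x = g x) -> f a = g a -> D a ->
  (forall s t, D s -> s < t <= a -> f s < f t) -> (forall s t, D t -> a <= s < t -> g s < g t) ->
  forall s t, D s -> D t -> s < t -> h s < h t.
Proof.
  intros Hf Hg Ha Da If Ig s t Ds Dt Hst.
  destruct (Rle_dec t a) as [Hta | Hta].
  - rewrite !Hf by lra. apply If; auto; lra.
  - rewrite (Hg t) by lra. destruct (Rle_dec s a) as [Hsa | Hsa].
    + rewrite (Hf s) by auto. apply Rle_lt_trans with (f a).
      * destruct (Req_dec s a) as [-> | Hne]; [lra |]. left; apply If; auto; lra.
      * rewrite Ha. apply Ig; auto; lra.
    + rewrite (Hg s) by lra. apply Ig; auto; lra.
Qed.

Section Inverse.
Variable f : R -> R.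
Hypothesis f_incr : strict_increasing f.
Hypothesis f_cont : continuity f.
Hypothesis f_unbounded : forall b, exists lb ub, f lb <= b <= f ub.

Lemma strict_increasing_le s t : s <= t -> f s <= f t.
Proof. intros [Hlt | ->]; [left; apply f_incr; auto | right; reflexivity]. Qed.

Lemma strict_increasing_lt_reg s t : f s < f t -> s < t.
Proof. intros H. destruct (Rlt_le_dec s t) as [| Hts]; auto. apply strict_increasing_le in Hts. lra. Qed.

Lemma strict_increasing_le_reg s t : f s <= f t -> s <= t.
Proof. intros H. destruct (Rle_lt_dec s t) as [| Hts]; auto. apply f_incr in Hts. lra. Qed.

Lemma continuous_unbounded_surjective b : exists t, f t = b.
Proof.
  destruct (f_unbounded b) as [lb [ub Hb]].
  destruct (IVT_between (fun t => f t - b) lb ub) as [t [_ Ht]].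
  - intros t. exact (continuity_pt_minus f (fun _ => b) t (f_cont t) (continuity_pt_cst b t)).
  - nra.
  - exists t; lra.
Qed.

Definition inv_fun (b : R) : R := epsilon (inhabits 0) (fun t => f t = b).

Lemma inv_funK b : f (inv_fun b) = b.
Proof. unfold inv_fun. apply epsilon_spec, continuous_unbounded_surjective. Qed.

Lemma inv_fun_continuous : continuity inv_fun.
Proof.
  intros b. set (lb := inv_fun (b - 1)). set (ub := inv_fun (b + 1)).
  assert (Hlb : f lb = b - 1) by apply inv_funK.
  assert (Hub : f ub = b + 1) by apply inv_funK.
  apply (continuity_pt_recip_interv f inv_fun lb ub).
  - apply strict_increasing_lt_reg; lra.
  - intros x y _ Hxy _. apply f_incr; auto.
  - intros x _ _. apply inv_funK.
  - intros x H1 H2. rewrite <- (inv_funK x) in H1, H2.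
    split; apply strict_increasing_le_reg; auto.
  - intros x _. apply f_cont.
  - lra.
Qed.

End Inverse.

Section Walks.
Variables (V Ed : Type) (tail head : Ed -> V) (pos : V -> point) (curve : Ed -> R -> point).

Fixpoint walk (v : V) (es : list Ed) (vs : list V) : Prop :=
  match es, vs with
  | [], [] => True
  | e :: es', w :: vs' => tail e = v /\ head e = w /\ walk w es' vs'
  | _, _ => False
  end.

Definition vray (v : V) (t : R) : point := (fst (pos v), snd (pos v) + t).

(* The walk drawn as one curve parametrised by [0, length es], one unit per edge, and
   prolonged by vertical rays below its first and above its last vertex, so that its
   height is an increasing bijection of R. *)
Fixpoint walk_curve (v : V) (es : list Ed) (t : R) : point :=
  match es with
  | [] => vray v t
  | e :: es' =>
      if Rle_dec t 0 then vray v t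
      else if Rle_dec t 1 then curve e t
      else walk_curve (head e) es' (t - 1)
  end.

Definition trace (vs : list V) (es : list Ed) (p : point) : Prop :=
  (exists v, In v vs /\ p = pos v) \/ (exists e s, In e es /\ in01 s /\ p = curve e s).

Definition walk_y (v : V) (es : list Ed) (t : R) : R := snd (walk_curve v es t).

Definition height_x (v : V) (es : list Ed) (b : R) : R :=
  fst (walk_curve v es (inv_fun (walk_y v es) b)).

Definition walk_right_of (v : V) (vs : list V) (es : list Ed) (p : point) : Prop :=
  snd (pos v) <= snd p <= snd (pos (last (v :: vs) v)) /\
  forall u, trace (v :: vs) es (u, snd p) -> u < fst p.

Lemma walk_of_nth_error v vs es : length (v :: vs) = S (length es) ->
  (forall i e, nth_error es i = Some e ->
     nth_error (v :: vs) i = Some (tail e) /\ nth_error (v :: vs) (S i) = Some (head e)) ->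
  walk v es vs.
Proof.
  revert v vs; induction es as [| e es IH]; intros v vs Hlen Hnth.
  - destruct vs; [exact I | discriminate].
  - destruct vs as [| w vs]; [discriminate |].
    destruct (Hnth 0%nat e eq_refl) as [Ht Hh]. injection Ht as Ht. injection Hh as Hh.
    split; [auto | split; [auto |]]. apply IH; [injection Hlen; auto |].
    intros i e' He'. exact (Hnth (S i) e' He').
Qed.

Lemma is_dpath_walk P : is_dpath V Ed tail head P ->
  exists v vs, pverts V Ed P = v :: vs /\ walk v (pedges V Ed P) vs.
Proof.
  intros [Hne [_ [Hlen Hnth]]]. destruct (pverts V Ed P) as [| v vs]; [contradiction |].
  exists v, vs. split; [reflexivity |]. apply walk_of_nth_error; auto.
Qed.

Hypothesis Dr : upward_planar_drawing V Ed tail head pos curve.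

Let pos_inj : forall v w, pos v = pos w -> v = w := proj1 Dr.
Let curve_continuous : forall e s, in01 s ->
  continuity_pt (fun t => fst (curve e t)) s /\ continuity_pt (fun t => snd (curve e t)) s :=
  proj1 (proj2 Dr).
Let curve_start e : curve e 0 = pos (tail e) := proj1 (proj1 (proj2 (proj2 Dr)) e).
Let curve_end e : curve e 1 = pos (head e) := proj2 (proj1 (proj2 (proj2 Dr)) e).
Let curve_y_increasing : forall e s t, in01 s -> in01 t -> s < t ->
  snd (curve e s) < snd (curve e t) := proj1 (proj2 (proj2 (proj2 Dr))).
Let curve_avoids_vertices : forall e s v, 0 < s < 1 -> curve e s <> pos v :=
  proj1 (proj2 (proj2 (proj2 (proj2 Dr)))).
Let curves_meet_at_vertices : forall e e' s t, e <> e' -> in01 s -> in01 t ->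
  curve e s = curve e' t -> exists v, curve e s = pos v :=
  proj2 (proj2 (proj2 (proj2 (proj2 Dr)))).

Lemma vray0 v : vray v 0 = pos v.
Proof. unfold vray. rewrite Rplus_0_r. destruct (pos v); reflexivity. Qed.

Lemma walk_curve_below v es t : t <= 0 -> walk_curve v es t = vray v t.
Proof. intros Ht. destruct es; cbn; [reflexivity |]. destruct (Rle_dec t 0); [auto | lra]. Qed.

Lemma walk_curve0 v es : walk_curve v es 0 = pos v.
Proof. rewrite walk_curve_below by lra. apply vray0. Qed.

Lemma walk_curve_shift v e es t : 0 <= t ->
  walk_curve v (e :: es) (t + 1) = walk_curve (head e) es t.
Proof.
  intros Ht. cbn. destruct (Rle_dec (t + 1) 0); [lra |].
  destruct (Rle_dec (t + 1) 1).
  - replace t with 0 by lra. rewrite Rplus_0_l, walk_curve0. apply curve_end.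
  - f_equal; ring.
Qed.

Lemma walk_curve_above v es vs d t : walk v es vs -> INR (length es) <= t ->
  walk_curve v es t = vray (last (v :: vs) d) (t - INR (length es)).
Proof.
  revert v vs t; induction es as [| e es IH]; intros v vs t Hw Ht.
  - destruct vs; [| destruct Hw]. cbn. f_equal. ring.
  - destruct vs as [| w vs]; [destruct Hw |]. destruct Hw as [_ [<- Hw]].
    cbn [length] in *. rewrite S_INR in *. pose proof (pos_INR (length es)).
    replace t with ((t - 1) + 1) by ring. rewrite walk_curve_shift by lra.
    rewrite (IH (head e) vs) by (auto; lra). f_equal; ring.
Qed.

Lemma walk_curve_y_increasing v es vs : walk v es vs ->
  strict_increasing (fun t => snd (walk_curve v es t)).
Proof.
  revert v vs; induction es as [| e es IH]; intros v vs Hw.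
  - intros s t Hst. cbn. lra.
  - destruct vs as [| w vs]; [destruct Hw |]. destruct Hw as [Hv [<- Hw]].
    set (after0 := fun t =>
      snd (if Rle_dec t 1 then curve e t else walk_curve (head e) es (t - 1))).
    assert (Hafter0 : forall s t, 0 <= s -> 0 <= t -> s < t -> after0 s < after0 t).
    { apply (increasing_piecewise (fun x => 0 <= x) (fun t => snd (curve e t))
               (fun t => snd (walk_curve (head e) es (t - 1))) after0 1).
      - intros x Hx. unfold after0. destruct (Rle_dec x 1); [reflexivity | lra].
      - intros x Hx. unfold after0. destruct (Rle_dec x 1); [lra | reflexivity].
      - cbn beta. replace (1 - 1) with 0 by ring. rewrite curve_end, walk_curve0. reflexivity.
      - lra.
      - intros s t Hs Hst. apply curve_y_increasing; unfold in01; lra.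
      - intros s t _ Hst. apply (IH _ vs Hw). lra. }
    intros s t Hst.
    apply (increasing_piecewise (fun _ => True) (fun t => snd (vray v t)) after0
             (fun t => snd (walk_curve v (e :: es) t)) 0); auto.
    + intros x Hx. cbn [walk_curve]. destruct (Rle_dec x 0); [reflexivity | lra].
    + intros x Hx. cbn [walk_curve]. unfold after0. destruct (Rle_dec x 0); [lra | reflexivity].
    + unfold after0. destruct (Rle_dec 0 1); [| lra]. rewrite vray0, curve_start, Hv. reflexivity.
    + intros s' t' _ H. unfold vray. cbn. lra.
    + intros s' t' _ H. apply Hafter0; lra.
Qed.

Lemma walk_curve_continuous (pr : point -> R) v es vs :
  (forall w t, continuity_pt (fun s => pr (vray w s)) t) ->
  (forall e s, in01 s -> continuity_pt (fun t => pr (curve e t)) s) ->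
  walk v es vs -> continuity (fun t => pr (walk_curve v es t)).
Proof.
  intros Cray Ccurve. revert v vs; induction es as [| e es IH]; intros v vs Hw t.
  - apply Cray.
  - destruct vs as [| w vs]; [destruct Hw |]. destruct Hw as [Hv [<- Hw]].
    set (after0 := fun t =>
      pr (if Rle_dec t 1 then curve e t else walk_curve (head e) es (t - 1))).
    apply (continuity_pt_piecewise (fun t => pr (vray v t)) after0
             (fun t => pr (walk_curve v (e :: es) t)) 0).
    + intros x Hx. cbn [walk_curve]. destruct (Rle_dec x 0); [reflexivity | lra].
    + intros x Hx. cbn [walk_curve]. unfold after0. destruct (Rle_dec x 0); [lra | reflexivity].
    + unfold after0. destruct (Rle_dec 0 1); [| lra]. rewrite vray0, curve_start, Hv. reflexivity.
    + intros _. apply Cray.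
    + intros Ht0. apply (continuity_pt_piecewise (fun t => pr (curve e t))
                           (fun t => pr (walk_curve (head e) es (t - 1))) after0 1).
      * intros x Hx. unfold after0. destruct (Rle_dec x 1); [reflexivity | lra].
      * intros x Hx. unfold after0. destruct (Rle_dec x 1); [lra | reflexivity].
      * cbn beta. replace (1 - 1) with 0 by ring. rewrite curve_end, walk_curve0. reflexivity.
      * intros Ht1. apply Ccurve. unfold in01; lra.
      * intros _. apply (continuity_pt_shift (fun t => pr (walk_curve (head e) es t))).
        apply (IH _ vs Hw).
Qed.

Lemma walk_image_trace v es vs t : walk v es vs -> 0 <= t <= INR (length es) ->
  trace (v :: vs) es (walk_curve v es t).
Proof.
  revert v vs t; induction es as [| e es IH]; intros v vs t Hw Ht.
  - destruct vs; [| destruct Hw]. cbn in Ht. replace t with 0 by lra.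
    rewrite walk_curve0. left; exists v; split; [left |]; auto.
  - destruct vs as [| w vs]; [destruct Hw |]. destruct Hw as [_ [<- Hw]].
    cbn [length] in Ht; rewrite S_INR in Ht. cbn [walk_curve].
    destruct (Rle_dec t 0); [| destruct (Rle_dec t 1)].
    + replace t with 0 by lra. rewrite vray0. left; exists v; split; [left |]; auto.
    + right; exists e, t. split; [left; reflexivity |]. split; [unfold in01; lra | reflexivity].
    + destruct (IH (head e) vs (t - 1) Hw) as [[x [Hx ->]] | [e' [s [He' [Hs ->]]]]]; [lra | |].
      * left; exists x; split; [right |]; auto.
      * right; exists e', s; split; [right |]; auto.
Qed.

Lemma walk_trace_image v es vs z : walk v es vs -> trace (v :: vs) es z ->
  exists t, 0 <= t <= INR (length es) /\ z = walk_curve v es t.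
Proof.
  revert v vs; induction es as [| e es IH]; intros v vs Hw Hz.
  - destruct vs; [| destruct Hw]. destruct Hz as [[x [[<- | []] ->]] | [e [s [[] _]]]].
    exists 0. split; [cbn; lra | symmetry; apply walk_curve0].
  - destruct vs as [| w vs]; [destruct Hw |]. destruct Hw as [Hv [<- Hw]].
    cbn [length]; rewrite S_INR. pose proof (pos_INR (length es)).
    assert (Hrest : trace (head e :: vs) es z ->
              exists t, 0 <= t <= INR (length es) + 1 /\ z = walk_curve v (e :: es) t).
    { intros Hz'. destruct (IH _ _ Hw Hz') as [t [Ht ->]].
      exists (t + 1). split; [lra |]. symmetry. apply walk_curve_shift; lra. }
    destruct Hz as [[x [[<- | Hx] ->]] | [e' [s [[<- | He'] [Hs ->]]]]].
    + exists 0. split; [lra | symmetry; apply walk_curve0].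
    + apply Hrest. left; exists x; auto.
    + unfold in01 in Hs. exists s. split; [lra |]. cbn [walk_curve].
      destruct (Rle_dec s 0); [| destruct (Rle_dec s 1); [reflexivity | lra]].
      replace s with 0 by lra. rewrite vray0, curve_start, Hv. reflexivity.
    + apply Hrest. right; exists e', s; auto.
Qed.

Section OneWalk.
Variables (v : V) (es : list Ed) (vs : list V).
Hypothesis Hw : walk v es vs.

Lemma walk_y_increasing : strict_increasing (walk_y v es).
Proof. exact (walk_curve_y_increasing v es vs Hw). Qed.

Lemma walk_y_continuous : continuity (walk_y v es).
Proof.
  apply (walk_curve_continuous snd v es vs); auto.
  - intros w t. apply continuity_pt_translate.
  - intros e s Hs. apply curve_continuous; auto.
Qed.

Lemma walk_y0 : walk_y v es 0 = snd (pos v).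
Proof. unfold walk_y. rewrite walk_curve0. reflexivity. Qed.

Lemma walk_y_end d : walk_y v es (INR (length es)) = snd (pos (last (v :: vs) d)).
Proof.
  unfold walk_y. rewrite (walk_curve_above v es vs d) by (auto; lra).
  rewrite Rminus_diag, vray0. reflexivity.
Qed.

Lemma walk_y_unbounded b : exists lb ub, walk_y v es lb <= b <= walk_y v es ub.
Proof.
  set (k := INR (length es)). set (yend := snd (pos (last (v :: vs) v))).
  exists (Rmin 0 (b - snd (pos v))), (Rmax k (k + b - yend)).
  pose proof (Rmin_l 0 (b - snd (pos v))). pose proof (Rmin_r 0 (b - snd (pos v))).
  pose proof (Rmax_l k (k + b - yend)). pose proof (Rmax_r k (k + b - yend)).
  unfold walk_y. rewrite walk_curve_below by auto.
  rewrite (walk_curve_above v es vs v) by (assumption || lra). unfold vray; cbn [fst snd]. fold k yend. lra.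
Qed.

Lemma walk_y_inv b : walk_y v es (inv_fun (walk_y v es) b) = b.
Proof. exact (inv_funK _ walk_y_continuous walk_y_unbounded b). Qed.

Lemma walk_endpoints_y_le d : snd (pos v) <= snd (pos (last (v :: vs) d)).
Proof.
  rewrite <- walk_y0, <- (walk_y_end d).
  apply (strict_increasing_le _ walk_y_increasing), pos_INR.
Qed.

Lemma height_x_continuous : continuity (height_x v es).
Proof.
  intros b. apply (continuity_pt_comp (inv_fun (walk_y v es)) (fun t => fst (walk_curve v es t))).
  - apply inv_fun_continuous; [exact walk_y_increasing | exact walk_y_continuous | exact walk_y_unbounded].
  - apply (walk_curve_continuous fst v es vs); auto.
    + intros w t. exact (continuity_pt_cst (fst (pos w)) t).
    + intros e s Hs. apply curve_continuous; auto.
Qed.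

Lemma height_x_trace d b : snd (pos v) <= b <= snd (pos (last (v :: vs) d)) ->
  trace (v :: vs) es (height_x v es b, b).
Proof.
  intros Hb. set (t := inv_fun (walk_y v es) b).
  assert (Ht : walk_y v es t = b) by apply walk_y_inv.
  rewrite <- walk_y0, <- (walk_y_end d), <- Ht in Hb.
  destruct Hb as [H0 H1].
  apply (strict_increasing_le_reg _ walk_y_increasing) in H0, H1.
  unfold height_x. fold t. rewrite <- Ht. unfold walk_y.
  rewrite <- surjective_pairing. apply walk_image_trace; auto.
Qed.

Lemma trace_height_x z : trace (v :: vs) es z -> height_x v es (snd z) = fst z.
Proof.
  intros Hz. destruct (walk_trace_image v es vs z Hw Hz) as [t [_ ->]].
  unfold height_x. fold (walk_y v es t). f_equal. f_equal.
  apply Rle_antisym; apply (strict_increasing_le_reg _ walk_y_increasing);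
    rewrite walk_y_inv; lra.
Qed.

Lemma trace_y_bounds d z : trace (v :: vs) es z ->
  snd (pos v) <= snd z <= snd (pos (last (v :: vs) d)).
Proof.
  intros Hz. destruct (walk_trace_image v es vs z Hw Hz) as [t [Ht ->]].
  fold (walk_y v es t). rewrite <- walk_y0, <- (walk_y_end d).
  split; apply (strict_increasing_le _ walk_y_increasing); lra.
Qed.

End OneWalk.

Lemma walk_edge_ends v es vs e : walk v es vs -> In e es ->
  In (tail e) (v :: vs) /\ In (head e) (v :: vs).
Proof.
  revert v vs; induction es as [| e' es IH]; intros v vs Hw He; [destruct He |].
  destruct vs as [| w vs]; [destruct Hw |]. destruct Hw as [Hv [Hh Hw]].
  destruct He as [<- | He].
  - rewrite Hv, Hh. split; [left | right; left]; auto.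
  - destruct (IH _ _ Hw He). split; right; auto.
Qed.

Lemma walk_vertex_on_edge v es vs e s x : walk v es vs -> In e es -> in01 s ->
  pos x = curve e s -> In x (v :: vs).
Proof.
  intros Hw He Hs Hx. destruct (walk_edge_ends v es vs e Hw He) as [Ht Hh].
  destruct (Req_dec s 0) as [-> | H0]; [| destruct (Req_dec s 1) as [-> | H1]].
  - rewrite curve_start in Hx. apply pos_inj in Hx. subst; auto.
  - rewrite curve_end in Hx. apply pos_inj in Hx. subst; auto.
  - exfalso. apply (curve_avoids_vertices e s x); [unfold in01 in Hs; lra | auto].
Qed.

Lemma disjoint_walks_disjoint_traces v1 es1 vs1 v2 es2 vs2 z :
  walk v1 es1 vs1 -> walk v2 es2 vs2 ->
  (forall x, In x (v1 :: vs1) -> ~ In x (v2 :: vs2)) ->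
  trace (v1 :: vs1) es1 z -> ~ trace (v2 :: vs2) es2 z.
Proof.
  intros W1 W2 Hdisj Z1 Z2.
  destruct Z1 as [[x1 [Hx1 ->]] | [e1 [s1 [He1 [Hs1 ->]]]]];
  destruct Z2 as [[x2 [Hx2 E]] | [e2 [s2 [He2 [Hs2 E]]]]].
  - apply pos_inj in E. subst x2. exact (Hdisj x1 Hx1 Hx2).
  - exact (Hdisj x1 Hx1 (walk_vertex_on_edge v2 es2 vs2 e2 s2 x1 W2 He2 Hs2 E)).
  - symmetry in E. exact (Hdisj x2 (walk_vertex_on_edge v1 es1 vs1 e1 s1 x2 W1 He1 Hs1 E) Hx2).
  - destruct (classic (e1 = e2)) as [<- | Hne].
    + exact (Hdisj (tail e1) (proj1 (walk_edge_ends _ _ _ e1 W1 He1))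
               (proj1 (walk_edge_ends _ _ _ e1 W2 He2))).
    + destruct (curves_meet_at_vertices e1 e2 s1 s2 Hne Hs1 Hs2 E) as [x Hx].
      apply (Hdisj x).
      * apply (walk_vertex_on_edge v1 es1 vs1 e1 s1); auto.
      * apply (walk_vertex_on_edge v2 es2 vs2 e2 s2); auto. rewrite <- E; auto.
Qed.

Lemma disjoint_walks_not_mutually_right v1 es1 vs1 v2 es2 vs2 p q :
  walk v1 es1 vs1 -> walk v2 es2 vs2 ->
  (forall x, In x (v1 :: vs1) -> ~ In x (v2 :: vs2)) ->
  trace (v2 :: vs2) es2 p -> walk_right_of v1 vs1 es1 p ->
  trace (v1 :: vs1) es1 q -> walk_right_of v2 vs2 es2 q -> False.
Proof.
  intros W1 W2 Hdisj Hp [Y1p K1] Hq [Y2q K2].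
  set (gap := fun b => height_x v2 es2 b - height_x v1 es1 b).
  assert (Gp : 0 < gap (snd p)).
  { specialize (K1 _ (height_x_trace v1 es1 vs1 W1 v1 (snd p) Y1p)).
    unfold gap. rewrite (trace_height_x v2 es2 vs2 W2 p Hp). lra. }
  assert (Gq : gap (snd q) < 0).
  { specialize (K2 _ (height_x_trace v2 es2 vs2 W2 v2 (snd q) Y2q)).
    unfold gap. rewrite (trace_height_x v1 es1 vs1 W1 q Hq). lra. }
  destruct (IVT_between gap (snd p) (snd q)) as [h [Hh Gh]].
  { intros b. exact (continuity_pt_minus _ _ b (height_x_continuous v2 es2 vs2 W2 b)
                                              (height_x_continuous v1 es1 vs1 W1 b)). }
  { nra. }
  pose proof (trace_y_bounds v2 es2 vs2 W2 v2 p Hp).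
  pose proof (trace_y_bounds v1 es1 vs1 W1 v1 q Hq).
  apply (disjoint_walks_disjoint_traces v1 es1 vs1 v2 es2 vs2 (height_x v1 es1 h, h) W1 W2 Hdisj).
  - apply (height_x_trace v1 es1 vs1 W1 v1). lra.
  - replace (height_x v1 es1 h) with (height_x v2 es2 h) by (unfold gap in Gh; lra).
    apply (height_x_trace v2 es2 vs2 W2 v2). lra.
Qed.

Lemma RightP_walk_right_of P v vs p :
  pverts V Ed P = v :: vs -> walk v (pedges V Ed P) vs ->
  RightP V Ed pos curve P p -> walk_right_of v vs (pedges V Ed P) p.
Proof.
  intros Hv Hw Hp. destruct (Hp v) as [Hy Hx].
  unfold first_vertex, last_vertex in Hy. rewrite Hv in Hy. cbn [hd] in Hy.
  rewrite Rmin_left, Rmax_right in Hy by apply (walk_endpoints_y_le v _ vs Hw).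
  split; [exact Hy |]. intros u Hu. apply Hx. unfold pts. rewrite Hv. exact Hu.
Qed.

End Walks.

Theorem lemma7 (V Ed : Type) (tail head : Ed -> V)
  (pos : V -> point) (curve : Ed -> R -> point)
  (F : dpath V Ed -> Prop) :
  finite_digraph V Ed ->
  upward_planar_drawing V Ed tail head pos curve ->
  disjoint_path_family V Ed tail head F ->
  (forall P, ~ prec_in V Ed pos curve F P P) /\
  (forall P1 P2, prec_in V Ed pos curve F P1 P2 -> ~ prec_in V Ed pos curve F P2 P1).
Proof.
  intros _ Dr [Hpaths Hdisj].
  assert (Hirrefl : forall P, ~ prec_in V Ed pos curve F P P).
  { intros P (_ & _ & p & Hp & Hnot & _). exact (Hnot Hp). }
  split; [exact Hirrefl |].
  intros P1 P2 H12 H21. destruct (classic (P1 = P2)) as [<- | Hne]; [exact (Hirrefl P1 H12) |].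
  destruct H12 as (F1 & F2 & p & Hp & _ & R1p). destruct H21 as (_ & _ & q & Hq & _ & R2q).
  destruct (is_dpath_walk V Ed tail head P1 (Hpaths P1 F1)) as (v1 & vs1 & E1 & W1).
  destruct (is_dpath_walk V Ed tail head P2 (Hpaths P2 F2)) as (v2 & vs2 & E2 & W2).
  apply (disjoint_walks_not_mutually_right V Ed tail head pos curve Dr
           v1 (pedges V Ed P1) vs1 v2 (pedges V Ed P2) vs2 p q W1 W2).
  - rewrite <- E1, <- E2. exact (Hdisj P1 P2 F1 F2 Hne).
  - unfold pts in Hp. rewrite E2 in Hp. exact Hp.
  - exact (RightP_walk_right_of V Ed tail head pos curve Dr P1 v1 vs1 p E1 W1 R1p).
  - unfold pts in Hq. rewrite E1 in Hq. exact Hq.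
  - exact (RightP_walk_right_of V Ed tail head pos curve Dr P2 v2 vs2 q E2 W2 R2q).
Qed.
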